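(* Let $f:E\to\mathbb{R}$ be $L$-smooth (not necessarily convex) and suppose $f$ attains its minimum at a point $x_*$. Let Algorithm AGMsDR (either option) be run from $x^0$ producing $y^0,\dots,y^N$ and $x^0,\dots,x^{N+1}$, with $N\ge 1$. Then $$\min_{k=0,\dots,N}\|\nabla f(y^k)\|_*^2\le\frac{2L\,(f(x^0)-f(x_* ))}{N}.$$
   Context: $E$ is a finite-dimensional real vector space with a norm $\|\cdot\|$; $E^*$ is its dual, $\langle g,x\rangle$ denotes the value of $g\in E^*$ at $x\in E$, and $\|g\|_*=\max\{\langle g,x\rangle:\|x\|\le 1\}$. For $g\in E^*$, $g^{\#}$ denotes a (fixed) element $s\in E$ with $\|s\|\le 1$ and $\langle g,s\rangle=\|g\|_*$. A prox-function $d:E\to\mathbb{R}$ is continuously differentiable, convex, $1$-strongly convex with respect to $\|\cdot\|$ (i.e. $d(y)-d(x)-\langle\nabla d(x),y-x\rangle\ge\frac12\|y-x\|^2$ for all $x,y\in E$) and satisfies $\min_E d=0$; its Bregman divergence is $V(x,z)=d(x)-d(z)-\langle\nabla d(z),x-z\rangle$. A function $f:E\to\mathbb{R}$ is $L$-smooth ($L>0$) if it is continuously differentiable and $\|\nabla f(x)-\nabla f(y)\|_*\le L\|x-y\|$ for all $x,y\in E$. Algorithm AGMsDR (input $x^0\in E$, and $L$ for Option (a)): set $A_0=0$, $v^0=x^0$, $\psi_0(x)=V(x,x^0)$. For $k=0,1,2,\dots$: 1. Choose $\beta_k\in\arg\min_{\beta\in[0,1]} f(v^k+\beta(x^k-v^k))$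 (a global minimizer over the interval) and set $y^k=v^k+\beta_k(x^k-v^k)$. 2. Option (a): $x^{k+1}\in\arg\min_{x\in E}\{f(y^k)+\langle\nabla f(y^k),x-y^k\rangle+\frac L2\|x-y^k\|^2\}$, and $a_{k+1}>0$ solves $\frac{a_{k+1}^2}{A_k+a_{k+1}}=\frac1L$. Option (b): $h_{k+1}\in\arg\min_{h\ge0} f(y^k-h(\nabla f(y^k))^{\#})$, $x^{k+1}=y^k-h_{k+1}(\nabla f(y^k))^{\#}$, and $a_{k+1}$ is the largest solution of $f(y^k)-\frac{a_{k+1}^2}{2(A_k+a_{k+1})}\|\nabla f(y^k)\|_*^2=f(x^{k+1})$. 3. $A_{k+1}=A_k+a_{k+1}$; $\psi_{k+1}(x)=\psi_k(x)+a_{k+1}\{f(y^k)+\langle\nabla f(y^k),x-y^k\rangle\}$; $v^{k+1}=\arg\min_{x\in E}\psi_{k+1}(x)$. It is assumed that all the minima in the algorithm are attained, and that $\nabla f(y^k)\neq 0$ for all iterations considered (otherwise $y^k$ is a stationary point and the method stops). *)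

From mathcomp Require Import ssreflect ssrfun ssrbool eqtype ssrnat seq fintype bigop.
From Stdlib Require Import Reals.

Set Implicit Arguments.
Unset Strict Implicit.

Local Open Scope R_scope.

(* E = R^n; its dual E^* is identified with R^n through the pairing below. *)
Definition vec (n : nat) := 'I_n -> R.

Definition vzero (n : nat) : vec n := fun _ => 0.
Definition vadd {n} (x y : vec n) : vec n := fun i => x i + y i.
Definition vsub {n} (x y : vec n) : vec n := fun i => x i - y i.
Definition vscal {n} (c : R) (x : vec n) : vec n := fun i => c * x i.

Definition pairing {n} (g x : vec n) : R := \big[Rplus/0]_(i < n) (g i * x i).

Definition is_norm {n} (nrm : vec n -> R) : Prop :=
  (forall x, 0 <= nrm x) /\
  (forall x, nrm x = 0 <-> x = @vzero n) /\
  (forall c x, nrm (vscal c x) = Rabs c * nrm x) /\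
  (forall x y, nrm (vadd x y) <= nrm x + nrm y).

Definition is_dual_norm {n} (nrm dn : vec n -> R) : Prop :=
  forall g, (forall x, nrm x <= 1 -> pairing g x <= dn g) /\
            (exists x, nrm x <= 1 /\ pairing g x = dn g).

Definition is_sharp {n} (nrm dn : vec n -> R) (sh : vec n -> vec n) : Prop :=
  forall g, nrm (sh g) <= 1 /\ pairing g (sh g) = dn g.

Definition has_gradient {n} (nrm : vec n -> R) (f : vec n -> R) (G : vec n -> vec n) : Prop :=
  forall x eps, 0 < eps -> exists del, 0 < del /\
    forall h, nrm h < del -> Rabs (f (vadd x h) - f x - pairing (G x) h) <= eps * nrm h.

Definition grad_continuous {n} (nrm dn : vec n -> R) (G : vec n -> vec n) : Prop :=
  forall x eps, 0 < eps -> exists del, 0 < del /\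
    forall z, nrm (vsub z x) < del -> dn (vsub (G z) (G x)) < eps.

Definition L_smooth {n} (nrm dn : vec n -> R) (L : R) (f : vec n -> R) (G : vec n -> vec n) : Prop :=
  0 < L /\ has_gradient nrm f G /\ grad_continuous nrm dn G /\
  (forall x y, dn (vsub (G x) (G y)) <= L * nrm (vsub x y)).

Definition convex {n} (d : vec n -> R) : Prop :=
  forall x y t, 0 <= t <= 1 ->
    d (vadd (vscal t x) (vscal (1 - t) y)) <= t * d x + (1 - t) * d y.

Definition is_prox {n} (nrm dn : vec n -> R) (d : vec n -> R) (Gd : vec n -> vec n) : Prop :=
  has_gradient nrm d Gd /\ grad_continuous nrm dn Gd /\ convex d /\
  (forall x y, d y - d x - pairing (Gd x) (vsub y x) >= / 2 * (nrm (vsub y x)) ^ 2) /\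
  (forall x, 0 <= d x) /\ (exists x, d x = 0).

Definition bregman {n} (d : vec n -> R) (Gd : vec n -> vec n) (x z : vec n) : R :=
  d x - d z - pairing (Gd z) (vsub x z).

Fixpoint psi {n} (d : vec n -> R) (Gd : vec n -> vec n) (f : vec n -> R)
  (G : vec n -> vec n) (x0 : vec n) (a : nat -> R) (y : nat -> vec n) (k : nat) (z : vec n) : R :=
  match k with
  | O => bregman d Gd z x0
  | S j => psi d Gd f G x0 a y j z + a (S j) * (f (y j) + pairing (G (y j)) (vsub z (y j)))
  end.

Definition step_a {n} (nrm : vec n -> R) (L : R) (f : vec n -> R) (G : vec n -> vec n)
  (yk xk1 : vec n) (Ak ak1 : R) : Prop :=
  (forall z, f yk + pairing (G yk) (vsub xk1 yk) + L / 2 * (nrm (vsub xk1 yk)) ^ 2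
             <= f yk + pairing (G yk) (vsub z yk) + L / 2 * (nrm (vsub z yk)) ^ 2) /\
  0 < ak1 /\ ak1 ^ 2 / (Ak + ak1) = / L.

Definition step_b {n} (dn : vec n -> R) (sh : vec n -> vec n) (f : vec n -> R) (G : vec n -> vec n)
  (yk xk1 : vec n) (hk1 Ak ak1 : R) : Prop :=
  0 <= hk1 /\
  (forall t, 0 <= t -> f (vsub yk (vscal hk1 (sh (G yk)))) <= f (vsub yk (vscal t (sh (G yk))))) /\
  xk1 = vsub yk (vscal hk1 (sh (G yk))) /\
  Ak + ak1 <> 0 /\
  f yk - ak1 ^ 2 / (2 * (Ak + ak1)) * (dn (G yk)) ^ 2 = f xk1 /\
  (forall a', Ak + a' <> 0 ->
     f yk - a' ^ 2 / (2 * (Ak + a')) * (dn (G yk)) ^ 2 = f xk1 -> a' <= ak1).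

Definition AGMsDR_run {n} (nrm dn : vec n -> R) (sh : vec n -> vec n) (L : R)
  (f : vec n -> R) (G : vec n -> vec n) (d : vec n -> R) (Gd : vec n -> vec n)
  (opt : bool) (x0 : vec n) (x y v : nat -> vec n) (A a beta h : nat -> R) (N : nat) : Prop :=
  A 0%nat = 0 /\ x 0%nat = x0 /\ v 0%nat = x0 /\
  forall k : nat, (k <= N)%nat ->
    (0 <= beta k <= 1 /\
     (forall b, 0 <= b <= 1 ->
        f (vadd (v k) (vscal (beta k) (vsub (x k) (v k))))
        <= f (vadd (v k) (vscal b (vsub (x k) (v k))))) /\
     y k = vadd (v k) (vscal (beta k) (vsub (x k) (v k)))) /\
    G (y k) <> @vzero n /\
    (if opt then step_a nrm L f G (y k) (x (S k)) (A k) (a (S k))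
     else step_b dn sh f G (y k) (x (S k)) (h (S k)) (A k) (a (S k))) /\
    A (S k) = A k + a (S k) /\
    (forall z, psi d Gd f G x0 a y (S k) (v (S k)) <= psi d Gd f G x0 a y (S k) z).

From HB Require Import structures.
From mathcomp Require Import ssreflect ssrfun ssrbool eqtype ssrnat seq fintype bigop.
From Stdlib Require Import Reals Lra FunctionalExtensionality.

(* The exact line search gives f(y^k) <= f(x^k) (take
   beta = 1), and either option of step 2 does at least as well as the step of
   length ||g||_*/L along -g^#, which by the descent lemma
   f(z) <= f(y) + <g, z - y> + L/2 ||z - y||^2 lowers f by ||g||_*^2/(2L).
   Hence f(x^{k+1}) <= f(x^k) - ||grad f(y^k)||_*^2/(2L); telescoping over the
   N+1 iterations and bounding the minimum by the mean gives the claim, even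
   with N+1 in place of N. *)

Set Implicit Arguments.
Unset Strict Implicit.

Local Open Scope R_scope.

HB.instance Definition _ := Monoid.isComLaw.Build R 0 Rplus
  (fun a b c => esym (Rplus_assoc a b c)) Rplus_comm Rplus_0_l.

Lemma vec_ext n (p q : vec n) : (forall i, p i = q i) -> p = q.
Proof. exact: functional_extensionality. Qed.

Lemma pairing_scal_r n (g x : vec n) c : pairing g (vscal c x) = c * pairing g x.
Proof.
rewrite /pairing (big_morph (Rmult c) (Rmult_plus_distr_l c) (Rmult_0_r c)).
by apply: eq_bigr => i _; rewrite /vscal; ring.
Qed.

Lemma pairing_sub_l n (g1 g2 x : vec n) :
  pairing (vsub g1 g2) x = pairing g1 x - pairing g2 x.
Proof.
rewrite /pairing /Rminus (big_morph Ropp Ropp_plus_distr Ropp_0) -big_split /=.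
by apply: eq_bigr => i _; rewrite /vsub; ring.
Qed.

Lemma pairing_0_r n (g : vec n) : pairing g (@vzero n) = 0.
Proof.
have -> : @vzero n = vscal 0 (@vzero n) by apply: vec_ext => i; rewrite /vscal /vzero; ring.
by rewrite pairing_scal_r Rmult_0_l.
Qed.

Section DualNorm.

Variables (n : nat) (nrm dn : vec n -> R).
Hypotheses (nrmP : is_norm nrm) (dnP : is_dual_norm nrm dn).

Lemma norm_0 : nrm (@vzero n) = 0.
Proof. by case: nrmP => _ [/(_ (@vzero n)) [_ ->]]. Qed.

Lemma dual_norm_ge0 g : 0 <= dn g.
Proof.
by have := proj1 (dnP g) (@vzero n); rewrite pairing_0_r norm_0; apply; lra.
Qed.

Lemma pairing_le_dual_norm g u : pairing g u <= dn g * nrm u.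
Proof.
have [nrm_ge0 [nrm_eq0 [nrmZ _]]] := nrmP.
have [u0 | u_pos] : nrm u = 0 \/ 0 < nrm u by have := nrm_ge0 u; lra.
  have -> : u = @vzero n by apply/nrm_eq0.
  by rewrite pairing_0_r norm_0 Rmult_0_r; apply: Rle_refl.
have unit_u : nrm (vscal (/ nrm u) u) <= 1.
  rewrite nrmZ Rabs_right; last by apply: Rle_ge; left; apply: Rinv_0_lt_compat.
  by rewrite Rinv_l; [apply: Rle_refl | lra].
have := proj1 (dnP g) _ unit_u; rewrite pairing_scal_r => H.
have -> : pairing g u = nrm u * (/ nrm u * pairing g u) by field; lra.
by rewrite (Rmult_comm (dn g)); apply: Rmult_le_compat_l; lra.
Qed.

End DualNorm.

Lemma Rabs_div_lt (X s eps : R) : s <> 0 -> Rabs X < eps * Rabs s -> Rabs (X / s) < eps.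
Proof.
move=> s_neq0 HX; have s_pos : 0 < Rabs s by apply: Rabs_pos_lt.
rewrite Rabs_mult Rabs_inv; apply: (Rmult_lt_reg_r (Rabs s)) => //.
by rewrite Rmult_assoc Rinv_l ?Rmult_1_r; lra.
Qed.

Section Gradient.

Variables (n : nat) (nrm : vec n -> R) (f : vec n -> R) (G : vec n -> vec n).
Hypotheses (nrmP : is_norm nrm) (fG : has_gradient nrm f G).

Lemma derivable_pt_lim_line (y u : vec n) t :
  derivable_pt_lim (fun s => f (vadd y (vscal s u))) t (pairing (G (vadd y (vscal t u))) u).
Proof.
have [nrm_ge0 [_ [nrmZ _]]] := nrmP.
move=> eps eps_pos; set M := nrm u; set yt := vadd y (vscal t u).
have M_ge0 : 0 <= M by apply: nrm_ge0.
set eps' := eps / 2 / (M + 1).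
have eps'E : eps' * (M + 1) = eps / 2 by rewrite /eps'; field; lra.
have eps'_pos : 0 < eps' by apply: Rdiv_lt_0_compat; lra.
have [del [del_pos Hdel]] := fG yt eps'_pos.
set del' := del / (M + 1).
have del'E : del' * (M + 1) = del by rewrite /del'; field; lra.
have del'_pos : 0 < del' by apply: Rdiv_lt_0_compat; lra.
exists (mkposreal _ del'_pos) => s s_neq0 /= s_small.
have step_small : nrm (vscal s u) < del by rewrite nrmZ -/M; nra.
have := Hdel _ step_small.
have -> : vadd yt (vscal s u) = vadd y (vscal (t + s) u).
  by apply: vec_ext => i; rewrite /yt /vadd /vscal; ring.
rewrite pairing_scal_r nrmZ -/M => Hest.
have -> : (f (vadd y (vscal (t + s) u)) - f yt) / s - pairing (G yt) u
          = (f (vadd y (vscal (t + s) u)) - f yt - s * pairing (G yt) u) / s.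
  by field.
apply: Rabs_div_lt => //; apply: (Rle_lt_trans _ _ _ Hest).
have := Rabs_pos_lt _ s_neq0; nra.
Qed.

End Gradient.

Section Smooth.

Variables (n : nat) (nrm dn : vec n -> R) (L : R) (f : vec n -> R) (G : vec n -> vec n).
Hypotheses (nrmP : is_norm nrm) (dnP : is_dual_norm nrm dn) (fP : L_smooth nrm dn L f G).

Lemma L_smooth_pairing_line (y u : vec n) t : 0 <= t ->
  pairing (G (vadd y (vscal t u))) u <= pairing (G y) u + L * t * nrm u ^ 2.
Proof.
move=> t_ge0; have [_ [_ [_ G_lip]]] := fP; have [nrm_ge0 [_ [nrmZ _]]] := nrmP.
set yt := vadd y (vscal t u).
have : dn (vsub (G yt) (G y)) <= L * (t * nrm u).
  have -> : t * nrm u = nrm (vsub yt y).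
    have -> : vsub yt y = vscal t u by apply: vec_ext => i; rewrite /yt /vsub /vadd /vscal; ring.
    by rewrite nrmZ Rabs_right //; lra.
  exact: G_lip.
have := pairing_le_dual_norm nrmP dnP (vsub (G yt) (G y)) u.
rewrite pairing_sub_l; have := nrm_ge0 u; nra.
Qed.

Lemma descent_lemma (y z : vec n) :
  f z <= f y + pairing (G y) (vsub z y) + L / 2 * nrm (vsub z y) ^ 2.
Proof.
have [_ [fG _]] := fP.
set u := vsub z y; set c1 := pairing (G y) u; set c2 := nrm u ^ 2.
pose gap s := f (vadd y (vscal s u)) - (c1 * s + L / 2 * c2 * s ^ 2).
pose gap' t := pairing (G (vadd y (vscal t u))) u - (c1 * 1 + L / 2 * c2 * (INR 2 * t ^ 1)).
have gap_deriv t : derivable_pt_lim gap t (gap' t).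
  apply: derivable_pt_lim_minus; first by have := derivable_pt_lim_line nrmP fG y u t.
  apply: derivable_pt_lim_plus; apply: derivable_pt_lim_scal.
    exact: derivable_pt_lim_id.
  exact: derivable_pt_lim_pow.
have [c [gap_mvt [c_pos _]]] :=
  MVT_cor1 gap 0 1 (fun t => exist _ (gap' t) (gap_deriv t)) Rlt_0_1.
have gap'_le0 : gap' c <= 0.
  by have := L_smooth_pairing_line y u (Rlt_le _ _ c_pos); rewrite /gap' /c1 /c2 /=; lra.
have line0 : vadd y (vscal 0 u) = y by apply: vec_ext => i; rewrite /vadd /vscal; ring.
have line1 : vadd y (vscal 1 u) = z by apply: vec_ext => i; rewrite /vadd /vscal /u /vsub; ring.
move: gap_mvt; rewrite /gap line0 line1 /= -/u -/c1 -/c2; nra.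
Qed.

End Smooth.

Lemma sharp_step_model n (nrm dn : vec n -> R) (sh : vec n -> vec n) (L : R) (g y : vec n) :
  is_norm nrm -> is_dual_norm nrm dn -> is_sharp nrm dn sh -> 0 < L ->
  let z := vsub y (vscal (dn g / L) (sh g)) in
  pairing g (vsub z y) + L / 2 * nrm (vsub z y) ^ 2 <= - dn g ^ 2 / (2 * L).
Proof.
move=> nrmP dnP shP L_pos z.
have [nrm_ge0 [_ [nrmZ _]]] := nrmP; have [sh_le1 sh_pairing] := shP g.
set t := dn g / L.
have t_ge0 : 0 <= t.
  exact: Rmult_le_pos (dual_norm_ge0 nrmP dnP g) (Rlt_le _ _ (Rinv_0_lt_compat _ L_pos)).
have -> : vsub z y = vscal (- t) (sh g).
  by apply: vec_ext => i; rewrite /z /t /vsub /vscal /=; ring.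
rewrite pairing_scal_r sh_pairing nrmZ Rabs_Ropp Rabs_right; last lra.
have -> : dn g = t * L by rewrite /t; field; lra.
have -> : - (t * L) ^ 2 / (2 * L) = - t * (t * L) + L / 2 * t ^ 2 by field; lra.
apply: Rplus_le_compat_l; apply: Rmult_le_compat_l; first lra.
by apply: pow_incr; have := nrm_ge0 (sh g); split; nra.
Qed.

Lemma AGMsDR_step_decrease n (nrm dn : vec n -> R) (sh : vec n -> vec n) L f G (opt : bool)
  (yk xk1 : vec n) hk1 Ak ak1 :
  is_norm nrm -> is_dual_norm nrm dn -> is_sharp nrm dn sh -> L_smooth nrm dn L f G ->
  (if opt then step_a nrm L f G yk xk1 Ak ak1 else step_b dn sh f G yk xk1 hk1 Ak ak1) ->
  f xk1 <= f yk - dn (G yk) ^ 2 / (2 * L).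
Proof.
move=> nrmP dnP shP fP step; have L_pos : 0 < L by case: fP.
have := sharp_step_model (G yk) yk nrmP dnP shP L_pos.
set z := vsub yk _ => model_z.
have descent_z := descent_lemma nrmP dnP fP yk z.
case: opt step => [[xk1_min _] | [_ [line_min [-> _]]]].
  by have := xk1_min z; have := descent_lemma nrmP dnP fP yk xk1; lra.
have t_ge0 : 0 <= dn (G yk) / L.
  exact: Rmult_le_pos (dual_norm_ge0 nrmP dnP _) (Rlt_le _ _ (Rinv_0_lt_compat _ L_pos)).
by have := line_min _ t_ge0; rewrite -/z; lra.
Qed.

Lemma exact_line_search_le_endpoint n (f : vec n -> R) (v x : vec n) beta :
  (forall b, 0 <= b <= 1 ->
     f (vadd v (vscal beta (vsub x v))) <= f (vadd v (vscal b (vsub x v)))) ->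
  f (vadd v (vscal beta (vsub x v))) <= f x.
Proof.
move=> /(_ 1 ltac:(lra)).
by have -> : vadd v (vscal 1 (vsub x v)) = x by apply: vec_ext => i; rewrite /vadd /vscal /vsub; ring.
Qed.

Lemma telescope_le (u c : nat -> R) (N : nat) :
  (forall k, (k <= N)%nat -> u k.+1 <= u k - c k) -> u N.+1 + sum_f_R0 c N <= u 0%nat.
Proof.
elim: N => [|N IH] decr; first by have := decr 0%nat isT; rewrite /=; lra.
have := IH (fun k kN => decr k (leqW kN)); have := decr N.+1 (leqnn _); rewrite tech5; lra.
Qed.

Lemma exists_le_mean (c : nat -> R) (N : nat) :
  exists k, (k <= N)%nat /\ INR N.+1 * c k <= sum_f_R0 c N.
Proof.
elim: N => [|N [k [kN Hk]]]; first by exists 0%nat; split => //=; lra.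
have INR_ge0 := pos_INR N.+1.
case: (Rle_lt_dec (c N.+1) (c k)) => [last_min | k_min].
  by exists N.+1; split => //; rewrite tech5 S_INR; nra.
by exists k; split; [exact: leqW | rewrite tech5 S_INR; nra].
Qed.

Theorem mainTheorem2 (n : nat) (nrm dn : vec n -> R) (sh : vec n -> vec n)
  (L : R) (f : vec n -> R) (G : vec n -> vec n) (d : vec n -> R) (Gd : vec n -> vec n)
  (xstar : vec n) (opt : bool) (x0 : vec n) (x y v : nat -> vec n)
  (A a beta h : nat -> R) (N : nat) :
  is_norm nrm -> is_dual_norm nrm dn -> is_sharp nrm dn sh ->
  L_smooth nrm dn L f G ->
  (forall z, f xstar <= f z) ->
  is_prox nrm dn d Gd ->
  AGMsDR_run nrm dn sh L f G d Gd opt x0 x y v A a beta h N ->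
  (1 <= N)%nat ->
  exists k : nat, (k <= N)%nat /\
    (dn (G (y k))) ^ 2 <= 2 * L * (f x0 - f xstar) / INR N.
Proof.
move=> nrmP dnP shP fP fstar_min _ [_ [x_0 [_ run]]] N_pos.
have L_pos : 0 < L by case: fP.
have N_gt0 : 0 < INR N by apply/lt_0_INR/ltP.
pose c k := dn (G (y k)) ^ 2 / (2 * L).
have decrease k : (k <= N)%nat -> f (x k.+1) <= f (x k) - c k.
  move=> /run [[_ [beta_min y_k]] [_ [step _]]].
  have := AGMsDR_step_decrease nrmP dnP shP fP step.
  by have := exact_line_search_le_endpoint beta_min; rewrite -y_k /c; lra.
have [k [kN c_k]] := exists_le_mean c N.
exists k; split => //.
have mean_bound : INR N.+1 * c k <= f x0 - f xstar.
  by have := telescope_le decrease; have := fstar_min (x N.+1); rewrite x_0; lra.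
have sq_bound : INR N.+1 * dn (G (y k)) ^ 2 <= 2 * L * (f x0 - f xstar).
  have -> : INR N.+1 * dn (G (y k)) ^ 2 = 2 * L * (INR N.+1 * c k) by rewrite /c; field; lra.
  by apply: Rmult_le_compat_l; lra.
apply: (Rmult_le_reg_r (INR N)) => //.
rewrite /Rdiv Rmult_assoc Rinv_l ?Rmult_1_r; last lra.
by move: sq_bound; rewrite S_INR; have := pow2_ge_0 (dn (G (y k))); nra.
Qed.
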